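(* For every $n\ge0$, the simplex $\mathbf{\Delta}^n$ is cofibrant in the Thomason model structure on $\mathbf{Cpx}$.
   Context: A simplicial complex consists of a vertex set and a collection of nonempty finite subsets (simplices) containing all singletons and closed under nonempty subsets; maps are vertex functions preserving simplices; $\mathbf{Cpx}$ is the category. $\mathbf{\Delta}^n$ is the complex on $\{0,\dots,n\}$ in which every nonempty subset is a simplex. $\mathrm{Sing}(K)_n=\mathbf{Cpx}(\mathbf{\Delta}^n,K)$ with simplicial operators by precomposition; $\mathrm{Ex}$ is the right adjoint of barycentric subdivision of simplicial sets. Thomason model structure on $\mathbf{Cpx}$: $f$ is a weak equivalence iff $\mathrm{Sing}(f)$ is a weak homotopy equivalence, a fibration iff $\mathrm{Ex}^2\mathrm{Sing}(f)$ is a Kan fibration, and a cofibration iff it has the left lifting property against all trivial fibrations; cofibrant means the map from the empty complex is a cofibration. *)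

From HB Require Import structures.
From mathcomp Require Import all_boot.
From Stdlib Require Import ProofIrrelevance.
From Stdlib Require List.

Set Implicit Arguments.
Unset Strict Implicit.
Unset Printing Implicit Defensive.

Record cpx := Cpx {
  vert : Type;
  simp : (vert -> Prop) -> Prop;
  simp_ne : forall s, simp s -> exists v, s v;
  simp_fin : forall s, simp s -> exists l : list vert, forall v, s v -> List.In v l;
  simp_single : forall v, simp (fun w => w = v);
  simp_sub : forall s t, simp s -> (forall v, t v -> s v) -> (exists v, t v) -> simp t
}.

Definition img (A B : Type) (f : A -> B) (s : A -> Prop) : B -> Prop :=
  fun w => exists v, s v /\ f v = w.

Record cmap (K L : cpx) := CMap {
  cf :> vert K -> vert L;
  cf_simp : forall s, @simp K s -> @simp L (img cf s)
}.

Lemma cmap_eq (K L : cpx) (f g : cmap K L) : cf f = cf g -> f = g.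
Proof.
case: f => f hf; case: g => g hg /= e; subst g; congr CMap; exact: proof_irrelevance.
Qed.

Definition cmap_comp_proof (K L M : cpx) (g : cmap L M) (f : cmap K L) :
  forall s, @simp K s -> @simp M (img (fun v => g (f v)) s).
Proof.
move=> s hs; have h := cf_simp g (cf_simp f hs).
apply: (simp_sub h).
  by move=> w [v [sv <-]]; exists (f v); split=> //; exists v.
have [v sv] := simp_ne hs; by exists (g (f v)); exists v.
Qed.

Definition cmap_comp (K L M : cpx) (g : cmap L M) (f : cmap K L) : cmap K M :=
  CMap (@cmap_comp_proof K L M g f).

Lemma In_of_mem (T : eqType) (x : T) (s : seq T) : x \in s -> List.In x s.
Proof.
elim: s => [|a s IH] //=; rewrite in_cons => /orP [/eqP -> | /IH]; by [left | right].
Qed.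

Definition Delta (n : nat) : cpx.
Proof.
refine (@Cpx 'I_n.+1 (fun s => exists v, s v) _ _ _ _).
- by [].
- move=> s _; exists (enum 'I_n.+1) => v _; apply: In_of_mem; by rewrite mem_enum.
- by move=> v; exists v.
- by move=> s t _ _ h.
Defined.

Definition empty_cpx : cpx.
Proof.
refine (@Cpx Empty_set (fun _ => False) _ _ _ _).
- by [].
- by [].
- by case.
- by [].
Defined.

Definition from_empty (L : cpx) : cmap empty_cpx L.
Proof. by refine (@CMap empty_cpx L (fun v => match v with end) _). Defined.

(** * The simplex category: monotone maps [m] -> [n] *)

Definition monob m n (f : {ffun 'I_m.+1 -> 'I_n.+1}) : bool :=
  [forall i : 'I_m.+1, forall j : 'I_m.+1, (i <= j) ==> (f i <= f j)].

Definition Mono (m n : nat) := {f : {ffun 'I_m.+1 -> 'I_n.+1} | monob f}.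

Definition mono_fun m n (t : Mono m n) : 'I_m.+1 -> 'I_n.+1 := fun i => sval t i.

Lemma monoP m n (t : Mono m n) (i j : 'I_m.+1) : i <= j -> mono_fun t i <= mono_fun t j.
Proof.
move=> hij; rewrite /mono_fun; case: t => f /= /forallP /(_ i) /forallP /(_ j) /implyP; exact.
Qed.

Definition mono_id (n : nat) : Mono n n.
Proof.
exists [ffun i => i]; apply/forallP=> i; apply/forallP=> j; apply/implyP.
by rewrite !ffunE.
Defined.

Definition mono_comp m k n (t : Mono k n) (u : Mono m k) : Mono m n.
Proof.
exists [ffun i => mono_fun t (mono_fun u i)].
apply/forallP=> i; apply/forallP=> j; apply/implyP=> hij.
by rewrite !ffunE; apply: monoP; apply: monoP.
Defined.

Definition face n (i : 'I_n.+2) : Mono n n.+1.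
Proof.
exists [ffun t => lift i t].
apply/forallP=> a; apply/forallP=> b; apply/implyP=> hab.
by rewrite !ffunE /= leq_bump2.
Defined.

Definition const_mono n (e : 'I_2) : Mono n 1.
Proof.
exists [ffun _ => e]; apply/forallP=> a; apply/forallP=> b; apply/implyP=> _.
by rewrite !ffunE.
Defined.

(* raw simplicial data; [is_sset] states the functor axioms *)
Record sset := SSet {
  ss :> nat -> Type;
  act : forall m n, Mono m n -> ss n -> ss m
}.
Arguments act {s m n} t x.

Definition is_sset (X : sset) : Prop :=
  (forall n (x : X n), act (mono_id n) x = x) /\
  (forall m k n (t : Mono k n) (u : Mono m k) (x : X n),
      act (mono_comp t u) x = act u (act t x)).

Record smap (X Y : sset) := SMap {
  sm :> forall n, X n -> Y n;
  sm_nat : forall m n (t : Mono m n) (x : X n), sm (act t x) = act t (sm x)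
}.
Arguments sm {X Y} s {n} x.

Lemma sig_eq (A : Type) (P : A -> Prop) (a b : {x : A | P x}) :
  sval a = sval b -> a = b.
Proof.
case: a => a pa; case: b => b pb /= e; subst b; congr exist; exact: proof_irrelevance.
Qed.

Definition smap_comp (X Y Z : sset) (g : smap Y Z) (f : smap X Y) : smap X Z.
Proof.
refine (@SMap X Z (fun n x => g n (f n x)) _).
by move=> m n t x; rewrite !sm_nat.
Defined.

Definition Sing (K : cpx) : sset.
Proof.
refine (@SSet (fun n => cmap (Delta n) K) _).
move=> m n t x.
refine (@CMap (Delta m) K (fun i => x (mono_fun t i)) _).
move=> s [v sv].
have hs : @simp (Delta n) (img (mono_fun t) s) by exists (mono_fun t v); exists v.
apply: (simp_sub (cf_simp x hs)).
- by move=> w [u [su <-]]; exists (mono_fun t u); split=> //; exists u.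
- by exists (x (mono_fun t v)); exists v.
Defined.

Definition Sing_map (K L : cpx) (f : cmap K L) : smap (Sing K) (Sing L).
Proof.
refine (@SMap (Sing K) (Sing L) (fun n x => cmap_comp f x) _).
by move=> m n t x; apply: cmap_eq.
Defined.

(** Barycentric subdivision of Delta^n = nerve of the poset of nonempty
    subsets of [n]; its k-simplices are weakly increasing chains
    S_0 <= ... <= S_k of nonempty subsets. *)
Definition chainb n k (c : {ffun 'I_k.+1 -> {set 'I_n.+1}}) : bool :=
  [forall i, c i != set0] &&
  [forall i : 'I_k.+1, forall j : 'I_k.+1, (i <= j) ==> (c i \subset c j)].

Definition Chain n k := {c : {ffun 'I_k.+1 -> {set 'I_n.+1}} | chainb c}.

(* simplicial operators of sd Delta^n *)
Definition pull n j k (c : Chain n k) (u : Mono j k) : Chain n j.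
Proof.
exists [ffun t => sval c (mono_fun u t)].
case: c => c /= /andP [/forallP h1 /forallP h2]; apply/andP; split.
- by apply/forallP=> i; rewrite ffunE.
- apply/forallP=> i; apply/forallP=> j'; apply/implyP=> hij; rewrite !ffunE.
  by move: (h2 (mono_fun u i)) => /forallP /(_ (mono_fun u j')) /implyP; apply; apply: monoP.
Defined.

(* sd applied to a monotone map [m] -> [n] *)
Definition push m n k (t : Mono m n) (c : Chain m k) : Chain n k.
Proof.
exists [ffun i => [set mono_fun t x | x in sval c i]].
case: c => c /= /andP [/forallP h1 /forallP h2]; apply/andP; split.
- by apply/forallP=> i; rewrite ffunE imset_eq0.
- apply/forallP=> i; apply/forallP=> j; apply/implyP=> hij; rewrite !ffunE.
  by apply: imsetS; move: (h2 i) => /forallP /(_ j) /implyP; apply.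
Defined.

Lemma push_pull m n k j (t : Mono m n) (c : Chain m k) (u : Mono j k) :
  push t (pull c u) = pull (push t c) u.
Proof. by apply: val_inj; apply/ffunP=> i; rewrite /= !ffunE. Qed.

(** Ex X: Ex(X)_n = sSet(sd Delta^n, X) *)
Definition Ex_el (X : sset) (n : nat) : Type :=
  {x : forall k, Chain n k -> X k |
     forall j k (u : Mono j k) (c : Chain n k), x j (pull c u) = act u (x k c)}.

Definition Ex (X : sset) : sset.
Proof.
refine (@SSet (Ex_el X) _).
move=> m n t x; exists (fun k c => sval x k (push t c)).
by move=> j k u c; rewrite push_pull; case: x => x hx /=; apply: hx.
Defined.

Definition Ex_map_fun (X Y : sset) (g : smap X Y) n (x : Ex X n) : Ex Y n.
Proof.
exists (fun k c => g k (sval x k c)).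
by move=> j k u c; case: x => x hx /=; rewrite hx sm_nat.
Defined.

Definition Ex_map (X Y : sset) (g : smap X Y) : smap (Ex X) (Ex Y).
Proof.
refine (@SMap (Ex X) (Ex Y) (@Ex_map_fun X Y g) _).
by move=> m n t x; apply: sig_eq.
Defined.

(** Kan fibrations (horn lifting).  A horn Lambda^{n+1}_k -> X is a family
    of n-simplices x_i (i <> k; the value at i = k is ignored) agreeing on
    the pairwise intersections of the faces. *)
Definition kan_fib (X Y : sset) (p : smap X Y) : Prop :=
  forall n (k : 'I_n.+2) (x : 'I_n.+2 -> X n),
    (forall i j, i != k -> j != k -> forall m (t t' : Mono m n),
        (forall a, lift i (mono_fun t a) = lift j (mono_fun t' a)) ->
        act t (x i) = act t' (x j)) ->
    forall y : Y n.+1, (forall i, i != k -> act (face i) y = p n (x i)) ->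
    exists z : X n.+1, (forall i, i != k -> act (face i) z = x i) /\ p n.+1 z = y.

Definition pt : sset := @SSet (fun _ => unit) (fun _ _ _ _ => tt).

Definition to_pt (X : sset) : smap X pt.
Proof. by refine (@SMap X pt (fun _ _ => tt) _). Defined.

Definition is_kan (X : sset) : Prop := kan_fib (to_pt X).

Definition sDelta1 : sset := @SSet (fun n => Mono n 1) (fun m n t u => mono_comp u t).

Definition sprod (X Y : sset) : sset :=
  @SSet (fun n => (X n * Y n)%type) (fun m n t xy => (act t xy.1, act t xy.2)).

(* elementary (left) homotopy h ~ h' : Delta[1] x Y -> Z *)
Definition homotopic (Y Z : sset) (h h' : smap Y Z) : Prop :=
  exists H : smap (sprod sDelta1 Y) Z,
    forall n (y : Y n), H n (const_mono n ord0, y) = h n y /\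
                        H n (const_mono n ord_max, y) = h' n y.

Definition sset_weq (X Y : sset) (f : smap X Y) : Prop :=
  forall Z : sset, is_sset Z -> is_kan Z ->
    (forall g : smap X Z, exists h : smap Y Z, homotopic (smap_comp h f) g) /\
    (forall h h' : smap Y Z, homotopic (smap_comp h f) (smap_comp h' f) ->
                             homotopic h h').

Definition cpx_weq (K L : cpx) (f : cmap K L) : Prop := sset_weq (Sing_map f).

Definition cpx_fib (K L : cpx) (f : cmap K L) : Prop :=
  kan_fib (Ex_map (Ex_map (Sing_map f))).

Definition cpx_trivfib (K L : cpx) (f : cmap K L) : Prop :=
  cpx_weq f /\ cpx_fib f.

Definition cpx_cofib (K L : cpx) (f : cmap K L) : Prop :=
  forall (X Y : cpx) (p : cmap X Y), cpx_trivfib p ->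
  forall (u : cmap K X) (v : cmap L Y), (forall a, p (u a) = v (f a)) ->
  exists h : cmap L X, (forall a, h (f a) = u a) /\ (forall b, p (h b) = v b).

Definition cpx_cofibrant (L : cpx) : Prop := cpx_cofib (from_empty L).

From mathcomp Require Import all_boot zify.
From Stdlib Require Import FunctionalExtensionality PropExtensionality.
From Stdlib Require Import Relation_Operators.

Set Implicit Arguments.
Unset Strict Implicit.
Unset Printing Implicit Defensive.

(* A map v : Delta^n -> Y lifts along a trivial fibration p : X -> Y as soon as
   v(0) is in the image of p.  Indeed, if the join of a simplex v with a vertex
   p x0 is a simplex, label the vertices of sd^2 Delta^(n+1) (flags of faces of
   Delta^(n+1)) by sending a flag F containing the top face to v(|F| - 1) and
   every other flag to p x0.  No proper face of Delta^(n+1) sees the top face,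
   so this element of Ex^2 Sing Y has all its faces constant at p x0; filling
   the horn of Ex^2 Sing X constant at x0 over it and restricting to the
   n-simplex of flags {top_chain(n - a), ..., top_chain(n)} lifts v.  Applied
   to edges, this shows that the image of p is a union of components of the
   1-skeleton of Y.  Testing the weak equivalence Sing p against the Kan
   complex of propositions (all of whose operators are identities) shows that
   every component of Y meets the image of p. *)

Lemma simp_range (K : cpx) n (v : cmap (Delta n) K) :
  simp (fun w => exists i, v i = w).
Proof.
have := @cf_simp _ _ v (fun _ => True) (ex_intro _ ord0 I).
move/simp_sub; apply=> [w [i <-]|]; first by exists i.
by exists (v ord0), ord0.
Qed.

Section MapsIntoSimplex.
Variables (K : cpx) (S : vert K -> Prop) (hS : simp S).

Definition cmap_into j (f : 'I_j.+1 -> vert K) (hf : forall a, S (f a)) :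
  cmap (Delta j) K.
Proof.
refine (@CMap (Delta j) K f _) => s [a sa].
by apply: (simp_sub hS) => [w [b [_ <-]]|]; [exact: hf | exists (f a), a].
Defined.

Definition flag n k j (c : Chain n k) (d : Chain k j) (a : 'I_j.+1) :
  {set {set 'I_n.+1}} := [set sval c i | i in sval d a].

Variables (n : nat) (f : {set {set 'I_n.+1}} -> vert K) (hf : forall F, S (f F)).

Definition Ex_Sing_label k (c : Chain n k) : Ex (Sing K) k.
Proof.
exists (fun j d => @cmap_into j (fun a => f (flag c d a)) (fun a => hf _)).
by move=> j j' u d; apply: cmap_eq; apply: functional_extensionality => a /=;
  rewrite /flag ffunE.
Defined.

Definition Ex2_label : Ex (Ex (Sing K)) n.
Proof.
exists Ex_Sing_label => j k u c; apply: sig_eq.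
apply: functional_extensionality_dep => j'; apply: functional_extensionality => d.
apply: cmap_eq; apply: functional_extensionality => a /=.
rewrite /flag ffunE -imset_comp; congr f; apply: eq_imset => i /=.
by rewrite ffunE.
Defined.

End MapsIntoSimplex.

Definition const_cmap (K : cpx) (x0 : vert K) k : cmap (Delta k) K :=
  @cmap_into _ _ (simp_single x0) k (fun _ => x0) (fun _ => erefl).

Definition Ex2_const (K : cpx) (x0 : vert K) n : Ex (Ex (Sing K)) n :=
  @Ex2_label _ _ (simp_single x0) n (fun _ => x0) (fun _ => erefl).

Lemma Ex2_Sing_ext (K : cpx) n (x y : Ex (Ex (Sing K)) n) :
  (forall k c j d a,
     (sval (sval x k c) j d : cmap _ _) a = (sval (sval y k c) j d : cmap _ _) a) ->
  x = y.
Proof.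
move=> exy; apply: sig_eq.
apply: functional_extensionality_dep => k; apply: functional_extensionality => c.
apply: sig_eq; apply: functional_extensionality_dep => j.
apply: functional_extensionality => d; apply: cmap_eq.
exact: functional_extensionality.
Qed.

Lemma act_Ex2_const (K : cpx) (x0 : vert K) m n (t t' : Mono m n) :
  act t (Ex2_const x0 n) = act t' (Ex2_const x0 n).
Proof. exact: Ex2_Sing_ext. Qed.

Lemma card_ord_lt m k : k <= m -> #|[set x : 'I_m | x < k]| = k.
Proof.
move=> km; have -> : [set x : 'I_m | x < k] = widen_ord km @: 'I_k.
  apply/setP=> x; rewrite inE; apply/idP/imsetP=> [xk|[y _ ->]].
    by exists (Ordinal xk); last apply: val_inj.
  by rewrite /= ltn_ord.
by rewrite card_imset ?card_ord // => y z [] /val_inj.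
Qed.

Lemma card_ord_geq m k : k <= m -> #|[set x : 'I_m | k <= x]| = m - k.
Proof.
move=> km; rewrite cardsCs card_ord.
have -> : ~: [set x : 'I_m | k <= x] = [set x : 'I_m | x < k].
  by apply/setP=> x; rewrite !inE -ltnNge.
by rewrite card_ord_lt.
Qed.

Definition top_chain_fun n : {ffun 'I_n.+1 -> {set 'I_n.+2}} :=
  [ffun i : 'I_n.+1 => [set x : 'I_n.+2 | x <= i + (val i == n)]].

Lemma top_chainP n : chainb (top_chain_fun n).
Proof.
apply/andP; split; apply/forallP=> i; rewrite ?ffunE.
  by apply/set0Pn; exists ord0; rewrite inE.
apply/forallP=> j; apply/implyP=> ij; rewrite !ffunE; apply/subsetP=> x.
rewrite !inE => /leq_trans; apply.
by have := ltn_ord j; case: (val i =P n); case: (val j =P n) => /=; lia.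
Qed.

Definition top_chain n : Chain n.+1 n := exist _ (top_chain_fun n) (top_chainP n).

Lemma top_chain_max n : sval (top_chain n) ord_max = setT.
Proof. by apply/setP=> x; rewrite /= ffunE !inE eqxx addn1 -ltnS ltn_ord. Qed.

Lemma top_chain_inj n : injective (sval (top_chain n)).
Proof.
suff le_ij i j : sval (top_chain n) i \subset sval (top_chain n) j -> i <= j.
  by move=> i j eij; apply/val_inj/eqP; rewrite eqn_leq !le_ij ?eij.
rewrite /= !ffunE => /subsetP /(_ (inord (i + (val i == n)))).
rewrite !inE inordK ?leqnn; last by have := ltn_ord i; case: eqP; lia.
move=> /(_ isT); have := ltn_ord i.
by case: (val i =P n); case: (val j =P n) => /=; lia.
Qed.

Definition tail_chain_fun n : {ffun 'I_n.+1 -> {set 'I_n.+1}} :=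
  [ffun a : 'I_n.+1 => [set i : 'I_n.+1 | n - a <= i]].

Lemma tail_chainP n : chainb (tail_chain_fun n).
Proof.
apply/andP; split; apply/forallP=> a; rewrite ?ffunE.
  by apply/set0Pn; exists ord_max; rewrite inE leq_subr.
apply/forallP=> b; apply/implyP=> ab; rewrite !ffunE; apply/subsetP=> i.
by rewrite !inE; apply: leq_trans; apply: leq_sub2l.
Qed.

Definition tail_chain n : Chain n n := exist _ (tail_chain_fun n) (tail_chainP n).

Lemma max_in_tail_chain n a : ord_max \in sval (tail_chain n) a.
Proof. by rewrite /= ffunE inE leq_subr. Qed.

Lemma card_tail_chain n a : #|sval (tail_chain n) a| = a.+1.
Proof. by rewrite /= ffunE card_ord_geq; have := ltn_ord a; lia. Qed.

Lemma setT_in_flag_top_tail n a : setT \in flag (top_chain n) (tail_chain n) a.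
Proof. by rewrite -top_chain_max; apply: imset_f; apply: max_in_tail_chain. Qed.

Lemma card_flag_top_tail n a : #|flag (top_chain n) (tail_chain n) a| = a.+1.
Proof. by rewrite card_imset ?card_tail_chain //; apply: top_chain_inj. Qed.

Section LiftCone.
Variables (X Y : cpx) (p : cmap X Y) (n : nat) (v : cmap (Delta n) Y) (x0 : vert X).
Let S w := (exists i, v i = w) \/ w = p x0.
Hypotheses (hS : simp S) (fib_p : cpx_fib p).

Definition top_flag_label (F : {set {set 'I_n.+2}}) : vert Y :=
  if setT \in F then v (inord #|F|.-1) else p x0.

Lemma top_flag_labelS F : S (top_flag_label F).
Proof. by rewrite /top_flag_label; case: ifP => _; [left; eexists | right]. Qed.

Let y := Ex2_label hS top_flag_labelS.

Lemma face_top_flag_label (i : 'I_n.+2) :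
  act (face i) y = Ex_map (Ex_map (Sing_map p)) n (Ex2_const x0 n).
Proof.
apply: Ex2_Sing_ext => k c j d a /=; rewrite /top_flag_label.
case: ifP => // /imsetP [l _]; rewrite ffunE => /setP /(_ i).
rewrite inE => /esym /imsetP [x _]; rewrite /mono_fun /= ffunE => ix.
by have := neq_lift i x; rewrite -ix eqxx.
Qed.

Lemma top_flag_label_top_tail a :
  top_flag_label (flag (top_chain n) (tail_chain n) a) = v a.
Proof.
by rewrite /top_flag_label setT_in_flag_top_tail card_flag_top_tail inord_val.
Qed.

Lemma cpx_fib_lift_cone : exists h : cmap (Delta n) X, forall a, p (h a) = v a.
Proof.
have [z [_ pz]] := fib_p (k := ord0) (fun _ _ _ _ _ t t' _ => act_Ex2_const x0 t t')
  (fun i _ => face_top_flag_label i).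
exists (sval (sval z n (top_chain n)) n (tail_chain n)) => a.
rewrite -top_flag_label_top_tail.
exact: (f_equal (fun w => (sval (sval w n (top_chain n)) n (tail_chain n) : cmap _ _) a) pz).
Qed.

End LiftCone.

Definition mono_const m n (e : 'I_n.+1) : Mono m n.
Proof.
exists [ffun _ => e]; apply/forallP=> a; apply/forallP=> b; apply/implyP=> _.
by rewrite !ffunE.
Defined.

Lemma mono_constE m n (e : 'I_n.+1) a : mono_fun (mono_const m e) a = e.
Proof. by rewrite /mono_fun ffunE. Qed.

Lemma Sing_is_sset (K : cpx) : is_sset (Sing K).
Proof.
by split=> *; apply: cmap_eq; apply: functional_extensionality => a;
  rewrite /= /mono_fun ffunE.
Qed.

Definition Prop_sset : sset := @SSet (fun _ => Prop) (fun _ _ _ P => P).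

Lemma Prop_sset_is_sset : is_sset Prop_sset.
Proof. by []. Qed.

Lemma Prop_sset_is_kan : is_kan Prop_sset.
Proof.
move=> n k P compat [] _.
have Pk i : i != k -> P i = P (lift k ord0).
  move=> ik; have k0k : lift k ord0 != k by rewrite eq_sym neq_lift.
  have [u ku _] := unlift_some ik; have [u0 ku0 _] := unlift_some k0k.
  by apply: (compat _ _ ik k0k 0 (mono_const 0 u) (mono_const 0 u0)) => a;
    rewrite !mono_constE -ku -ku0.
by exists (P (lift k ord0)); split=> // i /Pk.
Qed.

Definition smap_True (X : sset) : smap X Prop_sset :=
  @SMap X Prop_sset (fun _ _ => True) (fun _ _ _ _ => erefl).

Lemma homotopic_Prop_sset_vertex (X : sset) (h h' : smap X Prop_sset) :
  is_sset X -> homotopic h h' -> forall x : X 0, h 0 x = h' 0 x.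
Proof.
move=> [act_id act_comp] [H hH] x.
(* Both ends of the homotopy at x are faces of the degenerate edge [w], and
   every face map of [Prop_sset] is the identity. *)
pose w : sprod sDelta1 X 1 := (mono_id 1, act (mono_const 1 ord0) x).
have Hw e : H 0 (const_mono 0 e, x) = H 1 w.
  transitivity (H 0 (act (const_mono 0 e) w)); last exact: sm_nat.
  congr (H 0 (_, _)).
    by apply: sig_eq; apply/ffunP => a; rewrite /= /mono_fun /= !ffunE.
  rewrite /= -act_comp -[LHS]act_id; congr act.
  by apply: sig_eq; apply/ffunP => a; rewrite /= /mono_fun /= !ffunE !ord1.
by have [<- <-] := hH 0 x; rewrite !Hw.
Qed.

Section Components.
Variable Y : cpx.

Definition cpx_edge (a b : vert Y) : Prop := simp (fun w => w = a \/ w = b).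

Definition cpx_conn : vert Y -> vert Y -> Prop := clos_refl_sym_trans _ cpx_edge.

Lemma cpx_edge_sym a b : cpx_edge a b -> cpx_edge b a.
Proof.
by move/simp_sub; apply=> [w [] ->|]; [right | left | exists a; right].
Qed.

Lemma cpx_conn_simplex n (s : cmap (Delta n) Y) a b : cpx_conn (s a) (s b).
Proof.
apply: rst_step; apply: (simp_sub (simp_range s)) => [w [] ->|].
- by exists a.
- by exists b.
- by exists (s a); left.
Qed.

End Components.

Section ImageComponents.
Variables (X Y : cpx) (p : cmap X Y).

Definition meets_image_component : smap (Sing Y) Prop_sset.
Proof.
refine (@SMap (Sing Y) Prop_sset
  (fun n s => exists x, cpx_conn (s ord0) (p x)) _) => m n t s /=.
by apply: propositional_extensionality; split=> [] [x sx]; exists x;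
  apply: rst_trans sx; apply: cpx_conn_simplex.
Defined.

Lemma cpx_weq_conn_image : cpx_weq p -> forall y, exists x, cpx_conn y (p x).
Proof.
move=> weq_p y.
have [_ weq_inj] := weq_p Prop_sset Prop_sset_is_sset Prop_sset_is_kan.
have hom : homotopic (smap_comp meets_image_component (Sing_map p))
                     (smap_comp (smap_True _) (Sing_map p)).
  exists (smap_True _) => k s; split=> //=.
  by apply: propositional_extensionality; split=> // _; exists (s ord0); apply: rst_refl.
have := homotopic_Prop_sset_vertex (Sing_is_sset Y) (weq_inj _ _ hom) (const_cmap y 0).
by move=> /= ->.
Qed.

Hypothesis fib_p : cpx_fib p.

Lemma cpx_fib_edge_image a b :
  cpx_edge a b -> (exists x, p x = a) -> exists x, p x = b.
Proof.
move=> ab [x px]; subst a.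
have cone : simp (fun w => (exists i, const_cmap b 0 i = w) \/ w = p x).
  by apply: (simp_sub ab) => [w [[i <-]|->]|]; [right | left | exists b; left; exists ord0].
have [h ph] := cpx_fib_lift_cone cone fib_p.
by exists (h ord0); rewrite ph.
Qed.

Lemma cpx_fib_conn_image a b :
  cpx_conn a b -> (exists x, p x = a) <-> (exists x, p x = b).
Proof.
elim=> {a b} [a b ab | a | a b _ [ab ba] | a b c _ [ab ba] _ [bc cb]] //.
- by split; apply: cpx_fib_edge_image => //; apply: cpx_edge_sym.
- by split=> [/ab /bc | /cb /ba].
Qed.

End ImageComponents.

Theorem lemma6p1 (n : nat) : cpx_cofibrant (Delta n).
Proof.
move=> X Y p [weq_p fib_p] ? v _.
have [x0 v0_x0] := cpx_weq_conn_image weq_p (v ord0).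
have [x1 px1] : exists x1, p x1 = v ord0.
  by apply/(cpx_fib_conn_image fib_p v0_x0); exists x0.
have cone : simp (fun w => (exists i, v i = w) \/ w = p x1).
  apply: (simp_sub (simp_range v)) => [w [//|->]|]; first by exists ord0.
  by exists (v ord0); left; exists ord0.
have [h hv] := cpx_fib_lift_cone cone fib_p.
by exists h; split=> [[]|].
Qed.
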